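(* Let $G$ be any game and $\epsilon\ge0$. The negotiation function $\mathsf{nego}$ of $G$ has a least $\epsilon$-fixed point for the pointwise order on requirements, namely $v\mapsto\inf\{\lambda(v)\mid\lambda\text{ is an }\epsilon\text{-fixed point of }\mathsf{nego}\}$.
   Context: A game is a tuple $G=(\Pi,V,(V_i)_{i\in\Pi},E,\mu)$ where $\Pi$ is a finite set of players, $(V,E)$ is a directed graph in which every vertex has at least one outgoing edge, $(V_i)_{i\in\Pi}$ is a partition of $V$ ($V_i$ = vertices controlled by player $i$), and $\mu=(\mu_i)_{i\in\Pi}:V^\omega\to\mathbb{R}^\Pi$ is the payoff function. Plays are infinite paths, histories finite nonempty paths; $\rho_{\ge n}=\rho_n\rho_{n+1}\cdots$. A strategy for player $i$ from $v_0$ maps each history $hv$ starting at $v_0$ with $v\in V_i$ to a successor of $v$; $-i=\Pi\setminus\{i\}$; a complete profile $\bar\sigma$ has outcome $\langle\bar\sigma\rangle$; for a history $hv$, $\bar\sigma_{\|hv}$ is the profile from $v$ given by $\sigma_{j\|hv}(h')=\sigma_j(hh')$. A requirement is a map $\lambda:V\to\overline{\mathbb{R}}=\mathbb{R}\cup\{\pm\infty\}$, ordered pointwise. A play $\rho$ is $\lambda$-consistent if for all $i$ and $n$ with $\rho_n\in V_i$, $\mu_i(\rho_{\ge n})\ge\lambda(\rho_n)$. For $v\in V_i$, a profile $\bar\sigma_{-i}$ from $v$ is $\lambda$-rational if there is a strategy $\sigma_i$ such that, with $\bar\sigma=(\bar\sigma_{-i},\sigma_i)$, for every history $hu$ from $v$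 compatible with $\bar\sigma_{-i}$, the play $\langle\bar\sigma_{\|hu}\rangle$ is $\lambda$-consistent; $\lambda\mathsf{Rat}(v)$ is the set of such profiles. The negotiation function is $\mathsf{nego}(\lambda)(v)=\inf_{\bar\sigma_{-i}\in\lambda\mathsf{Rat}(v)}\sup_{\sigma_i}\mu_i(\langle\bar\sigma_{-i},\sigma_i\rangle)$ for $v\in V_i$, with $\inf\emptyset=+\infty$. For $\epsilon\ge0$, a requirement $\lambda$ is an $\epsilon$-fixed point of $\mathsf{nego}$ if for every $v\in V$, $\lambda(v)-\epsilon\le\mathsf{nego}(\lambda)(v)\le\lambda(v)+\epsilon$ (with the conventions $\pm\infty\pm\epsilon=\pm\infty$). *)

From HB Require Import structures.
From mathcomp Require Import all_boot all_order all_algebra.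
From mathcomp Require Import boolp classical_sets reals ereal Rstruct.
From Stdlib Require Rdefinitions.
Notation R := Rdefinitions.R.

Set Implicit Arguments.
Unset Strict Implicit.
Unset Printing Implicit Defensive.

Import Order.TTheory GRing.Theory Num.Theory.
Local Open Scope classical_set_scope.
Local Open Scope ereal_scope.

Record game := Game {
  Players : finType;
  Vtx : Type;
  Edge : Vtx -> Vtx -> Prop;
  E_total : forall v, exists w, Edge v w;
  own : Vtx -> Players;                     (* v ∈ V_i  iff  owner v = i *)
  payoff : Players -> (nat -> Vtx) -> R
}.

Section Game.
Variable G : game.
Local Notation V := (Vtx G).
Local Notation Pl := (Players G).
Local Notation E := (@Edge G).
Local Notation owner := (@own G).
Local Notation mu := (@payoff G).

Definition requirement := V -> \bar R.

Fixpoint is_path (x : V) (t : seq V) : Prop :=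
  match t with
  | [::] => True
  | y :: t' => E x y /\ is_path y t'
  end.

Definition hist_from (v0 : V) (h : seq V) : Prop :=
  exists t, h = v0 :: t /\ is_path v0 t.

Definition last_of (h : seq V) (d : V) : V := last d h.

(* Profiles are encoded by their "move functions": a (partial) profile maps a
   history to the next vertex chosen by the owner of its last vertex.  A
   complete profile is one move function; a strategy of player i only matters
   on histories ending in V_i, and a profile of the other players only on
   histories ending outside V_i. *)
Definition movefun := seq V -> V.

Definition strategy_for (i : Pl) (v0 : V) (sigma : movefun) : Prop :=
  forall h, hist_from v0 h -> owner (last v0 h) = i -> E (last v0 h) (sigma h).

Definition coalition_profile (i : Pl) (v0 : V) (s : movefun) : Prop :=
  forall h, hist_from v0 h -> owner (last v0 h) != i -> E (last v0 h) (s h).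

Definition combine (i : Pl) (v0 : V) (s : movefun) (sigma : movefun) : movefun :=
  fun h => if owner (last v0 h) == i then sigma h else s h.

Fixpoint out_prefix (s : movefun) (v0 : V) (n : nat) : seq V :=
  match n with
  | 0 => [:: v0]
  | n'.+1 => let p := out_prefix s v0 n' in rcons p (s p)
  end.

Definition outcome (s : movefun) (v0 : V) : nat -> V :=
  fun n => last v0 (out_prefix s v0 n).

(* The residual profile \bar\sigma_{|hu}, a profile from u = last of hu:
   h' (starting at u) is mapped to s (h h'). *)
Definition residual (s : movefun) (hu : seq V) : movefun :=
  fun h' => match hu with
            | [::] => s h'
            | x :: t => s (belast x t ++ h')
            end.

Definition compatible (i : Pl) (s : movefun) (hu : seq V) : Prop :=
  forall k, (k.+1 < size hu)%N ->
    forall d : V, owner (nth d hu k) != i -> nth d hu k.+1 = s (take k.+1 hu).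

Definition suffix_play (rho : nat -> V) (n : nat) : nat -> V := fun m => rho (n + m)%N.

Definition consistent (lam : requirement) (rho : nat -> V) : Prop :=
  forall n, ((mu (owner (rho n)) (suffix_play rho n))%:E >= lam (rho n)).

Definition lamRat (lam : requirement) (v : V) (s : movefun) : Prop :=
  coalition_profile (owner v) v s /\
  exists sigma, strategy_for (owner v) v sigma /\
    forall hu, hist_from v hu -> compatible (owner v) s hu ->
      consistent lam (outcome (residual (combine (owner v) v s sigma) hu)
                              (last v hu)).

Definition nego (lam : requirement) : requirement := fun v =>
  ereal_inf [set ereal_sup [set (mu (owner v)
                                   (outcome (combine (owner v) v s sigma) v))%:E
                           | sigma in [set sigma | strategy_for (owner v) v sigma]]
            | s in [set s | lamRat lam v s]].

Definition eps_fixed_point (eps : R) (lam : requirement) : Prop :=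
  forall v, lam v - eps%:E <= nego lam v /\ nego lam v <= lam v + eps%:E.

Definition inf_eps_fixed_points (eps : R) : requirement := fun v =>
  ereal_inf [set lam v | lam in [set lam | eps_fixed_point eps lam]].

End Game.

(* Every requirement lies below its negotiation (the trivial history forces the
   first vertex of the outcome to meet the requirement), and nego is monotone.
   Hence the pointwise infimum of the eps-fixed points satisfies the lower
   inequality trivially, and for every eps-fixed point lam its negotiation is
   below nego lam <= lam + eps, which gives the upper inequality after taking
   the infimum over lam. *)
From mathcomp Require Import all_boot all_order all_algebra.
From mathcomp Require Import boolp classical_sets reals ereal Rstruct.

Import Order.TTheory GRing.Theory Num.Theory.
Local Open Scope classical_set_scope.
Local Open Scope ereal_scope.

Section Negotiation.
Variable G : game.

Lemma nego_ge (lam : requirement G) v : lam v <= nego lam v.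
Proof.
apply: le_ereal_inf_tmp => _ [s [_ [sigma [Hsigma Hcons]]] <-].
have Hv : hist_from v [:: v] by exists [::].
have Hcompat : compatible (own v) s [:: v] by case.
apply: le_trans (Hcons _ Hv Hcompat 0%N) _.
by apply: ereal_sup_ubound; exists sigma.
Qed.

Lemma nego_mono (l1 l2 : requirement G) :
  (forall v, l1 v <= l2 v) -> forall v, nego l1 v <= nego l2 v.
Proof.
move=> l12 v; apply: ereal_inf_le_tmp => _ [s [Hs [sigma [Hsigma Hcons]]] <-].
exists s => //; split => //; exists sigma; split => // hu Hhu Hcompat n.
exact: le_trans (l12 _) (Hcons hu Hhu Hcompat n).
Qed.

Variable eps : R.

Lemma inf_eps_fixed_points_le (lam : requirement G) v :
  eps_fixed_point eps lam -> @inf_eps_fixed_points G eps v <= lam v.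
Proof. by move=> Hlam; apply: ereal_inf_lbound; exists lam. Qed.

Lemma nego_inf_eps_fixed_points_le v :
  nego (@inf_eps_fixed_points G eps) v <= inf_eps_fixed_points eps v + eps%:E.
Proof.
rewrite -leeBlDr //; apply: le_ereal_inf_tmp => _ [lam Hlam <-].
rewrite leeBlDr //; apply: le_trans (Hlam v).2.
by apply: nego_mono => w; apply: inf_eps_fixed_points_le.
Qed.

End Negotiation.

Theorem mainTheorem3 (G : game) (eps : R) (heps : (0 <= eps)%R) :
  @eps_fixed_point G eps (@inf_eps_fixed_points G eps) /\
  (forall lam : requirement G, eps_fixed_point eps lam ->
     forall v, @inf_eps_fixed_points G eps v <= lam v).
Proof.
split=> [v|lam Hlam v]; last exact: inf_eps_fixed_points_le.
split; last exact: nego_inf_eps_fixed_points_le.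
apply: le_trans _ (nego_ge _ _ v).
by rewrite leeBlDr // leeDl // lee_fin.
Qed.
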